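(* For every DBI normal formula $\varphi$, the pointed action model $(\mathcal{U}_\varphi,0)$ (more precisely, its pointed frame $(\langle E^\varphi,Q^\varphi\rangle,0)$) is privatized with respect to $\varphi$.
   Context: Agents $\mathcal{A}=\{1,\dots,n\}$, $n>1$; language $\mathcal{L}$: $\varphi ::= p \mid \neg\varphi \mid (\varphi\wedge\varphi)\mid B_i\varphi$, $\top$ the usual tautology. An action model $\mathcal{U}=\langle E,Q,\mathsf{pre}\rangle$ has a nonempty set $E$ of events, relations $Q_i\subseteq E\times E$, $\mathsf{pre}:E\to\mathcal{L}$. Target agents: $\mathsf{ta}(p)=\varnothing$, $\mathsf{ta}(\neg\phi)=\mathsf{ta}(\phi)$, $\mathsf{ta}(\phi\wedge\psi)=\mathsf{ta}(\phi)\cup\mathsf{ta}(\psi)$, $\mathsf{ta}(B_i\phi)=\{i\}$. DBI formulas: $\varphi ::= B_i\xi \mid B_i(\xi\wedge\varphi)\mid(\varphi\wedge\varphi)\mid B_i\varphi$, $\xi$ purely propositional. DBI normal: $B_i\xi$ always; $B_i\varphi$, $B_i(\xi\wedge\varphi)$ iff $\varphi$ DBI normal and $i\notin\mathsf{ta}(\varphi)$; $\varphi\wedge\psi$ iff both DBI normal and $\mathsf{ta}(\varphi)\cap\mathsf{ta}(\psi)=\varnothing$. Action model $\mathcal{U}_\varphi=\langle E^\varphi,Q^\varphi,\mathsf{pre}^\varphi\rangle$ for DBI normal $\varphi$, recursively; always $E^\varphi=\{0,-1\}\sqcup D^\varphi$, $\varnothing\ne D^\varphi\subseteq\{1,2,\dots\}$,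 $\mathsf{pre}^\varphi(0)=\mathsf{pre}^\varphi(-1)=\top$; $\underline{Q}_j:=Q_j\cap((E\setminus\{0\})\times(E\setminus\{0\}))$. (1) $\varphi=B_i\xi$: $D=\{m\}$, $\mathsf{pre}(m)=\xi$, $Q_j=\{(0,-1),(m,-1),(-1,-1)\}$ ($j\ne i$), $Q_i=\{(0,m),(m,m),(-1,-1)\}$. (2) $\varphi=B_i\psi$: fresh $m\ge1$, $m\notin D^\psi$; $D^\varphi=D^\psi\sqcup\{m\}$; $\mathsf{pre}^\varphi$ extends $\mathsf{pre}^\psi$ with $\mathsf{pre}^\varphi(m)=\top$; $Q^\varphi_j=\underline{Q}^\psi_j\cup\{(0,-1)\}\cup\{(m,k)\mid(0,k)\in Q^\psi_j\}$ ($j\ne i$); $Q^\varphi_i=\underline{Q}^\psi_i\cup\{(0,m),(m,m)\}$. (3) $\varphi=B_i(\xi\wedge\psi)$: as (2) but $\mathsf{pre}^\varphi(m)=\xi$. (4) $\varphi=\psi\wedge\theta$: with $D^\psi\cap D^\theta=\varnothing$, $D^\varphi=D^\psi\sqcup D^\theta$, $\mathsf{pre}^\varphi=\mathsf{pre}^\psi\cup\mathsf{pre}^\theta$, $Q^\varphi_j=\underline{Q}^\psi_j\cup\underline{Q}^\theta_j\cup\{(0,k)\mid(0,k)\in Q^\psi_j\cup Q^\theta_j, k\in D^\psi\sqcup D^\theta\}\cup\{(0,-1)\mid\text{no such }k\text{ exists}\}$. Modal syntactic tree $\mathcal{T}_\varphi$ of a DBI formula (an out-tree with unlabeled root, other nodes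 labeled by agents/modalities): $\mathcal{T}_{B_i\xi}$ is a root with one child labeled $B_i$; $\mathcal{T}_{B_i\psi}=\mathcal{T}_{B_i(\xi\wedge\psi)}$ is obtained by labeling the root of $\mathcal{T}_\psi$ with $B_i$ and making it the only child of a new root; $\mathcal{T}_{\psi\wedge\theta}$ is the disjoint union of $\mathcal{T}_\psi$ and $\mathcal{T}_\theta$ with their roots identified. $RootP(\varphi)$ is the set of paths in $\mathcal{T}_\varphi$ starting at the root (of any length $l\ge0$); the agent sequence $\mathsf{agSeq}(\sigma)=(i_1,\dots,i_l)$ of such a path lists the agents labeling its non-root nodes in order (empty for the empty path). For a frame $\mathcal{F}=\langle W,R\rangle$, $w\in W$ and an agent sequence $(i_1,\dots,i_l)$, the cluster is $C^{i_1,\dots,i_l}_{\mathcal{F},w}=\{u\in W\mid \exists u_2,\dots,u_l\in W:\ wR_{i_1}u_2R_{i_2}\cdots u_lR_{i_l}u\}$, with $C^\varepsilon_{\mathcal{F},w}=\{w\}$. $\mathcal{A}^l_{\mathrm{nsr}}$ is the set of agent sequences of length $l$ with no two successive equal agents. $(\mathcal{F},w)$ is privatized w.r.t. $\varphi$ iff for every $\sigma\in RootP(\varphi)$: $C^{\mathsf{agSeq}(\sigma)}_{\mathcal{F},w}\neq\varnothing$ and for every $s\in\bigcup_{l\ge0}\mathcal{A}^l_{\mathrm{nsr}}\setminus\{\mathsf{agSeq}(\sigma)\}$, $C^{\mathsf{agSeq}(\sigma)}_{\mathcal{F},w}\cap C^{s}_{\mathcal{F},w}=\varnothing$. *)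

From Stdlib Require Import ZArith List Arith Bool.
Import ListNotations.
Open Scope Z_scope.

Inductive form : Type :=
| Var : nat -> form
| Neg : form -> form
| And : form -> form -> form
| B : nat -> form -> form.

Definition top : form := Neg (And (Var 0) (Neg (Var 0))).

Fixpoint isprop (f : form) : bool :=
  match f with
  | Var _ => true
  | Neg g => isprop g
  | And g h => isprop g && isprop h
  | B _ _ => false
  end.

Fixpoint agents_in (n : nat) (f : form) : Prop :=
  match f with
  | Var _ => True
  | Neg g => agents_in n g
  | And g h => agents_in n g /\ agents_in n h
  | B i g => (1 <= i <= n)%nat /\ agents_in n g
  end.

Fixpoint ta (f : form) (j : nat) : Prop :=
  match f with
  | Var _ => False
  | Neg g => ta g j
  | And g h => ta g j \/ ta h j
  | B i _ => j = i
  end.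

Inductive DBI : form -> Prop :=
| DBI_Bxi : forall i xi, isprop xi = true -> DBI (B i xi)
| DBI_Bxiphi : forall i xi phi, isprop xi = true -> DBI phi -> DBI (B i (And xi phi))
| DBI_and : forall phi psi, DBI phi -> DBI psi -> DBI (And phi psi)
| DBI_B : forall i phi, DBI phi -> DBI (B i phi).

Inductive DBInormal : form -> Prop :=
| N_Bxi : forall i xi, isprop xi = true -> DBInormal (B i xi)
| N_B : forall i phi, DBInormal phi -> ~ ta phi i -> DBInormal (B i phi)
| N_Bxiphi : forall i xi phi, isprop xi = true -> DBInormal phi -> ~ ta phi i ->
    DBInormal (B i (And xi phi))
| N_and : forall phi psi, DBInormal phi -> DBInormal psi ->
    (forall j, ta phi j -> ta psi j -> False) -> DBInormal (And phi psi).

(** Action models over events in Z: the event set is E = {0,-1} ⊔ D,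
    relations Q : agent -> Z -> Z -> Prop, preconditions pre : Z -> form
    (values of pre outside E are irrelevant). *)
Definition Eset (D : Z -> Prop) (e : Z) : Prop := e = 0 \/ e = -1 \/ D e.

Definition Qunder (D : Z -> Prop) (Q : nat -> Z -> Z -> Prop) (j : nat) (a b : Z) : Prop :=
  Q j a b /\ Eset D a /\ a <> 0 /\ Eset D b /\ b <> 0.

(** [UM phi D Q pre]: (E, Q, pre) with E = Eset D is an action model U_phi
    obtained by the recursive construction (1)-(4), for some admissible choice
    of the fresh events. *)
Inductive UM : form -> (Z -> Prop) -> (nat -> Z -> Z -> Prop) -> (Z -> form) -> Prop :=
| UM_Bxi : forall i xi m,
    isprop xi = true -> 1 <= m ->
    UM (B i xi) (fun e => e = m)
       (fun j a b =>
          if Nat.eqb j i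
          then (a = 0 /\ b = m) \/ (a = m /\ b = m) \/ (a = -1 /\ b = -1)
          else (a = 0 /\ b = -1) \/ (a = m /\ b = -1) \/ (a = -1 /\ b = -1))
       (fun e => if Z.eqb e m then xi else top)
| UM_B : forall i psi D Q pre m,
    UM psi D Q pre -> isprop psi = false ->
    1 <= m -> ~ D m ->
    UM (B i psi) (fun e => D e \/ e = m)
       (fun j a b =>
          if Nat.eqb j i
          then Qunder D Q j a b \/ (a = 0 /\ b = m) \/ (a = m /\ b = m)
          else Qunder D Q j a b \/ (a = 0 /\ b = -1) \/ (a = m /\ Q j 0 b))
       (fun e => if Z.eqb e m then top else pre e)
| UM_Bxiphi : forall i xi psi D Q pre m,
    isprop xi = true -> UM psi D Q pre -> isprop psi = false ->
    1 <= m -> ~ D m ->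
    UM (B i (And xi psi)) (fun e => D e \/ e = m)
       (fun j a b =>
          if Nat.eqb j i
          then Qunder D Q j a b \/ (a = 0 /\ b = m) \/ (a = m /\ b = m)
          else Qunder D Q j a b \/ (a = 0 /\ b = -1) \/ (a = m /\ Q j 0 b))
       (fun e => if Z.eqb e m then xi else pre e)
| UM_and : forall psi theta D1 Q1 pre1 D2 Q2 pre2 (pre : Z -> form),
    UM psi D1 Q1 pre1 -> UM theta D2 Q2 pre2 ->
    (forall e, D1 e -> D2 e -> False) ->
    pre 0 = top -> pre (-1) = top ->
    (forall e, D1 e -> pre e = pre1 e) ->
    (forall e, D2 e -> pre e = pre2 e) ->
    UM (And psi theta) (fun e => D1 e \/ D2 e)
       (fun j a b =>
          Qunder D1 Q1 j a b \/ Qunder D2 Q2 j a b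
          \/ (a = 0 /\ (Q1 j 0 b \/ Q2 j 0 b) /\ (D1 b \/ D2 b))
          \/ (a = 0 /\ b = -1 /\
              ~ (exists k, (Q1 j 0 k \/ Q2 j 0 k) /\ (D1 k \/ D2 k))))
       pre.

(** Modal syntactic trees: a node has a list of labeled children
    (label = agent of the child node, subtree rooted at the child). *)
Inductive tree : Type := Node : list (nat * tree) -> tree.

Definition children (t : tree) : list (nat * tree) := let (c) := t in c.

(** T_phi for DBI formulas (other shapes are irrelevant). *)
Fixpoint mtree (f : form) : tree :=
  match f with
  | B i g =>
      if isprop g then Node [(i, Node [])]
      else match g with
           | And a b => if isprop a then Node [(i, mtree b)] else Node [(i, mtree g)]
           | _ => Node [(i, mtree g)]
           end
  | And a b => Node (children (mtree a) ++ children (mtree b))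
  | _ => Node []
  end.

(** Paths from the root, encoded by the successive child positions. *)
Inductive RootP : tree -> list nat -> Prop :=
| RootP_nil : forall t, RootP t []
| RootP_cons : forall ch k i t' p,
    nth_error ch k = Some (i, t') -> RootP t' p -> RootP (Node ch) (k :: p).

Fixpoint agSeq (t : tree) (p : list nat) : list nat :=
  match p with
  | [] => []
  | k :: p' =>
      match nth_error (children t) k with
      | Some (i, t') => i :: agSeq t' p'
      | None => []
      end
  end.

Inductive reach (W : Z -> Prop) (R : nat -> Z -> Z -> Prop) : Z -> list nat -> Z -> Prop :=
| reach_nil : forall w, reach W R w [] w
| reach_cons : forall w v i s u, R i w v -> W v -> reach W R v s u -> reach W R w (i :: s) u.

Definition cluster (W : Z -> Prop) (R : nat -> Z -> Z -> Prop) (w : Z) (s : list nat) (u : Z) : Prop :=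
  W u /\ reach W R w s u.

Fixpoint nsr (n : nat) (s : list nat) : Prop :=
  match s with
  | [] => True
  | i :: s' => (1 <= i <= n)%nat /\
      match s' with [] => True | j :: _ => i <> j end /\ nsr n s'
  end.

Definition privatized (n : nat) (W : Z -> Prop) (R : nat -> Z -> Z -> Prop) (w : Z) (phi : form) : Prop :=
  forall sigma, RootP (mtree phi) sigma ->
    (exists u, cluster W R w (agSeq (mtree phi) sigma) u) /\
    (forall s, nsr n s -> s <> agSeq (mtree phi) sigma ->
       forall u, cluster W R w (agSeq (mtree phi) sigma) u -> cluster W R w s u -> False).

(* In U_phi the event 0 is the root, -1 is an absorbing sink, and every other
   event is entered from 0 along a single word without consecutive repetitions:
   in U_(B_i psi) the fresh event m is the only i-successor of 0 and takes over
   the role of the root of U_psi for all other agents, while in U_(psi /\ theta)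
   the two sides are disjoint and closed, so a non-sink event keeps the word it
   has in its component.  Conversely, following the agent sequence of a root
   path of T_phi never falls into the sink, because in a DBI normal formula the
   first agent below B_i differs from i, and every branch of a conjunction
   starts with a target agent of its own conjunct only.  Hence the cluster of a
   root path is nonempty, avoids -1, and meets C^s only if s is its own agent
   sequence. *)

From Stdlib Require Import ZArith List Lia.
Import ListNotations.
Open Scope Z_scope.

Section Reach.
Variables (W : Z -> Prop) (R : nat -> Z -> Z -> Prop).

Lemma reach_nil_iff w u : reach W R w [] u <-> u = w.
Proof. split; [intros H; inversion H; reflexivity | intros ->; constructor]. Qed.

Lemma reach_cons_iff w i s u :
  reach W R w (i :: s) u <-> exists v, R i w v /\ W v /\ reach W R v s u.
Proof.
  split.
  - intros H; inversion H; subst; eauto.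
  - intros (v & Hwv & Hv & Hvu); econstructor; eauto.
Qed.

Lemma reach_closed (S : Z -> Prop) :
  (forall j a b, S a -> R j a b -> S b) ->
  forall s v u, S v -> reach W R v s u -> S u.
Proof.
  intros HS s; induction s as [|i s IH]; intros v u Hv.
  - rewrite reach_nil_iff; intros ->; exact Hv.
  - rewrite reach_cons_iff; intros (x & Hvx & _ & Hxu); eauto.
Qed.

End Reach.

Lemma reach_agree W W' R R' (S : Z -> Prop) :
  (forall j a b, S a -> (R j a b /\ W b <-> R' j a b /\ W' b)) ->
  (forall j a b, S a -> R' j a b -> S b) ->
  forall s v u, S v -> (reach W R v s u <-> reach W' R' v s u).
Proof.
  intros Hagree Hclosed s; induction s as [|i s IH]; intros v u Hv.
  - now rewrite !reach_nil_iff.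
  - rewrite !reach_cons_iff.
    split; intros (x & Hvx & Hx & Hxu); exists x.
    + destruct (proj1 (Hagree i v x Hv) (conj Hvx Hx)) as [Hvx' Hx'].
      rewrite <- IH by eauto; auto.
    + destruct (proj2 (Hagree i v x Hv) (conj Hvx Hx)) as [Hvx' Hx'].
      rewrite IH by eauto; auto.
Qed.

Fixpoint stutter_free (s : list nat) : Prop :=
  match s with
  | i :: (j :: _) as s' => i <> j /\ stutter_free s'
  | _ => True
  end.

Lemma nsr_stutter_free n s : nsr n s -> stutter_free s.
Proof.
  induction s as [|i s IH]; simpl; [auto|].
  intros (_ & Hij & Hs); destruct s; auto.
Qed.

Lemma Eset_nonroot (D : Z -> Prop) x : x = -1 \/ D x -> Eset D x.
Proof. unfold Eset; tauto. Qed.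

Lemma Qunder_source D Q j a b : Qunder D Q j a b -> a = -1 \/ D a.
Proof. intros (_ & [Ha|Ha] & Ha0 & _); tauto. Qed.

Lemma Qunder_target D Q j a b : Qunder D Q j a b -> b = -1 \/ D b.
Proof. intros (_ & _ & _ & [Hb|Hb] & Hb0); tauto. Qed.

Record shaped (D : Z -> Prop) (Q : nat -> Z -> Z -> Prop) : Prop := {
  shaped_pos : forall e, D e -> 1 <= e;
  shaped_target : forall j a b, Q j a b -> b = -1 \/ D b;
  shaped_sink : forall j b, Q j (-1) b -> b = -1;
  shaped_sink_loop : forall j, Q j (-1) (-1)
}.
Arguments shaped_pos {D Q}.
Arguments shaped_target {D Q}.
Arguments shaped_sink {D Q}.
Arguments shaped_sink_loop {D Q}.

Section Shaped.
Variables (D : Z -> Prop) (Q : nat -> Z -> Z -> Prop).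
Hypothesis HDQ : shaped D Q.

Lemma nonroot_neq0 x : x = -1 \/ D x -> x <> 0.
Proof. intros [->|Hx]; [lia | apply (shaped_pos HDQ) in Hx; lia]. Qed.

Lemma Qunder_iff j a b : a = -1 \/ D a -> (Qunder D Q j a b <-> Q j a b).
Proof.
  intros Ha; split; [intros [H _]; exact H|]. intros H.
  pose proof (shaped_target HDQ _ _ _ H) as Hb.
  repeat split; auto using Eset_nonroot, nonroot_neq0.
Qed.

Variable W : Z -> Prop.

Lemma reach_sink s u : reach W Q (-1) s u -> u = -1.
Proof.
  apply (reach_closed W Q (fun x => x = -1)); [|reflexivity].
  intros j a b ->; apply (shaped_sink HDQ).
Qed.

Lemma reach_nonroot s v u : v = -1 \/ D v -> reach W Q v s u -> u = -1 \/ D u.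
Proof.
  apply (reach_closed W Q (fun x => x = -1 \/ D x)).
  intros j a b _; apply (shaped_target HDQ).
Qed.

Lemma reach_cons_nonroot v j s u : reach W Q v (j :: s) u -> u = -1 \/ D u.
Proof.
  rewrite reach_cons_iff; intros (x & Hvx & _ & Hxu).
  exact (reach_nonroot _ _ _ (shaped_target HDQ _ _ _ Hvx) Hxu).
Qed.

Lemma reach_root_nil v s : reach W Q v s 0 -> s = [].
Proof.
  destruct s as [|j s]; [reflexivity|]; intros H.
  destruct (nonroot_neq0 _ (reach_cons_nonroot _ _ _ _ H)); reflexivity.
Qed.

End Shaped.

Definition unique_words (W : Z -> Prop) (Q : nat -> Z -> Z -> Prop) : Prop :=
  forall s s' u, stutter_free s -> stutter_free s' ->
    reach W Q 0 s u -> reach W Q 0 s' u -> u <> -1 -> s = s'.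

Definition live (W : Z -> Prop) (Q : nat -> Z -> Z -> Prop) (a : list nat) : Prop :=
  (exists u, W u /\ reach W Q 0 a u) /\ (forall u, reach W Q 0 a u -> u <> -1).

Definition paths_live (t : tree) (W : Z -> Prop) (Q : nat -> Z -> Z -> Prop) : Prop :=
  forall sigma, RootP t sigma -> live W Q (agSeq t sigma).

Lemma live_nil (D : Z -> Prop) Q : live (Eset D) Q [].
Proof.
  split; [exists 0; split; [left; reflexivity | constructor]|].
  intros u Hu; apply reach_nil_iff in Hu; lia.
Qed.

Lemma RootP_cons_inv t k p :
  RootP t (k :: p) ->
  exists j t', nth_error (children t) k = Some (j, t') /\ RootP t' p /\
    agSeq t (k :: p) = j :: agSeq t' p.
Proof.
  intros H; inversion H as [|ch k' j t' p' Hk Hp]; subst; simpl; rewrite Hk; eauto.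
Qed.

Lemma RootP_single i t sigma :
  RootP (Node [(i, t)]) sigma ->
  sigma = [] \/ exists p, RootP t p /\ agSeq (Node [(i, t)]) sigma = i :: agSeq t p.
Proof.
  intros H; inversion H as [|ch k j t' p Hk Hp]; subst; [now left|right].
  destruct k as [|[|k]]; simpl in Hk; inversion Hk; subst; eauto.
Qed.

Lemma RootP_app t1 t2 sigma :
  RootP (Node (children t1 ++ children t2)) sigma ->
  (exists sigma', RootP t1 sigma' /\
     agSeq (Node (children t1 ++ children t2)) sigma = agSeq t1 sigma') \/
  (exists sigma', RootP t2 sigma' /\
     agSeq (Node (children t1 ++ children t2)) sigma = agSeq t2 sigma').
Proof.
  destruct t1 as [c1], t2 as [c2]; simpl.
  intros H; inversion H as [|ch k j t' p Hk Hp]; subst.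
  { left; exists []; split; [constructor | reflexivity]. }
  simpl; rewrite Hk.
  destruct (Nat.lt_ge_cases k (length c1)) as [Hlt|Hge].
  - rewrite nth_error_app1 in Hk by exact Hlt.
    left; exists (k :: p); split; [econstructor; eauto | simpl; now rewrite Hk].
  - rewrite nth_error_app2 in Hk by exact Hge.
    right; exists (k - length c1 :: p)%nat; split; [econstructor; eauto | simpl; now rewrite Hk].
Qed.

Lemma mtree_children_ta f k j t :
  nth_error (children (mtree f)) k = Some (j, t) -> ta f j.
Proof.
  revert k; induction f as [x|g _|g IHg h IHh|i g _]; intros k Hk; simpl in *.
  - destruct k; discriminate.
  - destruct k; discriminate.
  - destruct (Nat.lt_ge_cases k (length (children (mtree g)))) as [Hlt|Hge].
    + rewrite nth_error_app1 in Hk by exact Hlt; eauto.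
    + rewrite nth_error_app2 in Hk by exact Hge; eauto.
  - assert (Hi : exists t', mtree (B i g) = Node [(i, t')]).
    { simpl; destruct (isprop g); [eauto|].
      destruct g as [| |a b|]; [eauto|eauto| |eauto]; destruct (isprop a); eauto. }
    destruct Hi as [t' Ht']; simpl in Ht'; rewrite Ht' in Hk.
    destruct k as [|[|k]]; simpl in Hk; congruence.
Qed.

(* [plain_body psi]: the formula [B_i psi] falls under construction (2), not (1) or (3). *)
Definition plain_body (psi : form) : Prop :=
  isprop psi = false /\ forall a b, psi = And a b -> isprop a = false.

Lemma mtree_B_plain i psi : plain_body psi -> mtree (B i psi) = Node [(i, mtree psi)].
Proof.
  intros [Hpsi Hand]; simpl; rewrite Hpsi.
  destruct psi as [| |a b|]; try reflexivity.
  now rewrite (Hand a b eq_refl).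
Qed.

Lemma mtree_B_and_prop i xi psi :
  isprop xi = true -> isprop psi = false -> mtree (B i (And xi psi)) = Node [(i, mtree psi)].
Proof. intros Hxi Hpsi; simpl; now rewrite Hxi, Hpsi. Qed.

Lemma DBInormal_not_prop f : DBInormal f -> isprop f = false.
Proof. intros H; induction H; simpl; auto; now rewrite IHDBInormal1. Qed.

Lemma DBInormal_and_inv a b :
  DBInormal (And a b) -> DBInormal a /\ DBInormal b /\ (forall j, ta a j -> ta b j -> False).
Proof. intros H; inversion H; auto. Qed.

Lemma DBInormal_plain_body f : DBInormal f -> plain_body f.
Proof.
  intros H; split; [now apply DBInormal_not_prop|].
  intros a b ->; apply DBInormal_not_prop, (DBInormal_and_inv _ _ H).
Qed.

Lemma DBInormal_B_inv i psi :
  plain_body psi -> DBInormal (B i psi) -> DBInormal psi /\ ~ ta psi i.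
Proof.
  intros [Hpsi Hand] H; inversion H; subst; auto.
  - congruence.
  - rewrite (Hand _ _ eq_refl) in *; discriminate.
Qed.

Lemma DBInormal_B_and_inv i xi psi :
  isprop xi = true -> isprop psi = false ->
  DBInormal (B i (And xi psi)) -> DBInormal psi /\ ~ ta psi i.
Proof.
  intros Hxi Hpsi H; inversion H; subst; auto.
  - simpl in *; rewrite Hpsi in *; destruct (isprop xi); discriminate.
  - destruct (DBInormal_and_inv xi psi) as [Hx _]; auto.
    rewrite (DBInormal_not_prop _ Hx) in Hxi; discriminate.
Qed.

Definition paths_stutter_free (t : tree) : Prop :=
  forall sigma, RootP t sigma -> stutter_free (agSeq t sigma).

Lemma paths_stutter_free_single i t :
  (forall k j t', nth_error (children t) k = Some (j, t') -> j <> i) ->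
  paths_stutter_free t -> paths_stutter_free (Node [(i, t)]).
Proof.
  intros Hlab Ht sigma Hsig.
  destruct (RootP_single _ _ _ Hsig) as [->|(p & Hp & ->)]; [exact I|].
  destruct p as [|k p]; [exact I|].
  specialize (Ht _ Hp).
  destruct (RootP_cons_inv _ _ _ Hp) as (j & t' & Hk & _ & Hag).
  rewrite Hag in *; split; [apply not_eq_sym; eauto | exact Ht].
Qed.

Lemma DBInormal_paths_stutter_free f : DBInormal f -> paths_stutter_free (mtree f).
Proof.
  intros H; induction H as [i xi Hxi|i psi Hn IH Hi|i xi psi Hxi Hn IH Hi|a b _ IHa _ IHb _].
  - simpl; rewrite Hxi; apply paths_stutter_free_single.
    + intros [|k]; discriminate.
    + intros [|k p] _; [exact I | destruct k; exact I].
  - rewrite mtree_B_plain by now apply DBInormal_plain_body.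
    apply paths_stutter_free_single; auto.
    intros k j t Hk ->; exact (Hi (mtree_children_ta _ _ _ _ Hk)).
  - rewrite mtree_B_and_prop by auto using DBInormal_not_prop.
    apply paths_stutter_free_single; auto.
    intros k j t Hk ->; exact (Hi (mtree_children_ta _ _ _ _ Hk)).
  - intros sigma Hsig; change (mtree (And a b)) with
      (Node (children (mtree a) ++ children (mtree b))) in *.
    destruct (RootP_app _ _ _ Hsig) as [(s & Hs & ->)|(s & Hs & ->)]; auto.
Qed.

Definition Q_Bxi (i : nat) (m : Z) : nat -> Z -> Z -> Prop := fun j a b =>
  if Nat.eqb j i
  then (a = 0 /\ b = m) \/ (a = m /\ b = m) \/ (a = -1 /\ b = -1)
  else (a = 0 /\ b = -1) \/ (a = m /\ b = -1) \/ (a = -1 /\ b = -1).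

Section Bxi.
Variables (i : nat) (m : Z).
Hypothesis Hm : 1 <= m.

Lemma Q_Bxi_shaped : shaped (fun e => e = m) (Q_Bxi i m).
Proof.
  split; [intros e ->; exact Hm| | |];
    intros j; unfold Q_Bxi; destruct (j =? i)%nat; intuition lia.
Qed.

Lemma Q_Bxi_root j v : Q_Bxi i m j 0 v -> (j = i /\ v = m) \/ (j <> i /\ v = -1).
Proof. unfold Q_Bxi; destruct (Nat.eqb_spec j i); intuition lia. Qed.

Lemma Q_Bxi_from_m j v : j <> i -> Q_Bxi i m j m v -> v = -1.
Proof. unfold Q_Bxi; destruct (Nat.eqb_spec j i); intuition lia. Qed.

Lemma Q_Bxi_words s u :
  stutter_free s -> reach (Eset (fun e => e = m)) (Q_Bxi i m) 0 s u -> u <> -1 ->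
  (s = [] /\ u = 0) \/ (s = [i] /\ u = m).
Proof.
  pose proof Q_Bxi_shaped as Hsh.
  intros Hs Hr Hu; destruct s as [|j s].
  { left; split; [reflexivity | now apply reach_nil_iff in Hr]. }
  apply reach_cons_iff in Hr as (v & Hv & _ & Hr).
  destruct (Q_Bxi_root _ _ Hv) as [[-> ->]|[_ ->]];
    [|exfalso; exact (Hu (reach_sink _ _ Hsh _ _ _ Hr))].
  destruct s as [|k s].
  { right; split; [reflexivity | now apply reach_nil_iff in Hr]. }
  apply reach_cons_iff in Hr as (w & Hw & _ & Hr).
  rewrite (Q_Bxi_from_m k w (not_eq_sym (proj1 Hs)) Hw) in Hr.
  exfalso; exact (Hu (reach_sink _ _ Hsh _ _ _ Hr)).
Qed.

Lemma Q_Bxi_unique_words : unique_words (Eset (fun e => e = m)) (Q_Bxi i m).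
Proof.
  intros s s' u Hs Hs' Hr Hr' Hu.
  destruct (Q_Bxi_words _ _ Hs Hr Hu) as [[-> ->]|[-> ->]];
    destruct (Q_Bxi_words _ _ Hs' Hr' Hu) as [[-> ?]|[-> ?]]; auto; lia.
Qed.

Lemma Q_Bxi_live : paths_live (Node [(i, Node [])]) (Eset (fun e => e = m)) (Q_Bxi i m).
Proof.
  intros sigma Hsig.
  destruct (RootP_single _ _ _ Hsig) as [->|(p & Hp & ->)]; [apply live_nil|].
  inversion Hp as [|ch k j t p' Hk]; subst; [|destruct k; discriminate].
  split.
  - exists m; split; [right; right; reflexivity|].
    apply reach_cons_iff; exists m; split; [|split; [right; right; reflexivity | constructor]].
    unfold Q_Bxi; rewrite Nat.eqb_refl; auto.
  - intros u Hr; apply reach_cons_iff in Hr as (v & Hv & _ & Hr).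
    apply reach_nil_iff in Hr as ->.
    destruct (Q_Bxi_root _ _ Hv) as [[_ ->]|[? _]]; [lia | congruence].
Qed.

End Bxi.

Definition Q_B (i : nat) (D : Z -> Prop) (Q : nat -> Z -> Z -> Prop) (m : Z) :
  nat -> Z -> Z -> Prop := fun j a b =>
  if Nat.eqb j i
  then Qunder D Q j a b \/ (a = 0 /\ b = m) \/ (a = m /\ b = m)
  else Qunder D Q j a b \/ (a = 0 /\ b = -1) \/ (a = m /\ Q j 0 b).

Section Box.
Variables (i : nat) (D : Z -> Prop) (Q : nat -> Z -> Z -> Prop) (m : Z).
Hypotheses (HDQ : shaped D Q) (Hm : 1 <= m) (HmD : ~ D m).

Local Notation D' := (fun e => D e \/ e = m).
Local Notation W' := (Eset (fun e => D e \/ e = m)).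
Local Notation Q' := (Q_B i D Q m).

Lemma Q_B_nonroot j a b : a = -1 \/ D a -> (Q' j a b <-> Q j a b).
Proof.
  intros Ha; rewrite <- (Qunder_iff _ _ HDQ j a b Ha).
  assert (Ha0 := nonroot_neq0 _ _ HDQ a Ha).
  assert (Ham : a <> m) by (intros ->; destruct Ha; [lia | contradiction]).
  unfold Q_B; destruct (j =? i)%nat; intuition.
Qed.

Lemma Q_B_root j v : Q' j 0 v <-> (j = i /\ v = m) \/ (j <> i /\ v = -1).
Proof.
  unfold Q_B, Qunder; destruct (Nat.eqb_spec j i); intuition lia.
Qed.

Lemma Q_B_from_m j v : j <> i -> (Q' j m v <-> Q j 0 v).
Proof.
  intros Hji; unfold Q_B, Qunder, Eset; destruct (Nat.eqb_spec j i); [contradiction|].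
  intuition lia.
Qed.

Lemma Q_B_shaped : shaped D' Q'.
Proof.
  split.
  - intros e [He | ->]; [exact (shaped_pos HDQ e He) | exact Hm].
  - intros j a b; unfold Q_B; destruct (j =? i)%nat;
      intros [H|[[_ ->]|[_ H]]]; auto;
      [apply Qunder_target in H | apply Qunder_target in H | apply (shaped_target HDQ) in H];
      tauto.
  - intros j b; rewrite Q_B_nonroot by auto; apply (shaped_sink HDQ).
  - intros j; rewrite Q_B_nonroot by auto; apply (shaped_sink_loop HDQ).
Qed.

Lemma reach_Q_B_nonroot s v u :
  v = -1 \/ D v -> (reach W' Q' v s u <-> reach (Eset D) Q v s u).
Proof.
  apply (reach_agree _ _ _ _ (fun x => x = -1 \/ D x)).
  - intros j a b Ha; rewrite Q_B_nonroot by exact Ha.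
    split; intros [H _]; pose proof (shaped_target HDQ _ _ _ H);
      split; auto; apply Eset_nonroot; tauto.
  - intros j a b _; apply (shaped_target HDQ).
Qed.

Lemma reach_Q_B_root_i t u : reach W' Q' 0 (i :: t) u <-> reach W' Q' m t u.
Proof.
  rewrite reach_cons_iff; split.
  - intros (v & Hv & _ & Hr); apply Q_B_root in Hv as [[_ ->]|[? _]]; [exact Hr|congruence].
  - intros Hr; exists m; rewrite Q_B_root; repeat split; auto.
    right; right; right; reflexivity.
Qed.

Lemma reach_Q_B_root_other j t u : j <> i -> reach W' Q' 0 (j :: t) u -> u = -1.
Proof.
  intros Hji; rewrite reach_cons_iff; intros (v & Hv & _ & Hr).
  apply Q_B_root in Hv as [[? _]|[_ ->]]; [contradiction|].
  exact (reach_sink _ _ Q_B_shaped _ _ _ Hr).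
Qed.

Lemma reach_Q_B_from_m j t u :
  j <> i -> (reach W' Q' m (j :: t) u <-> reach (Eset D) Q 0 (j :: t) u).
Proof.
  intros Hji; rewrite !reach_cons_iff.
  split; intros (v & Hv & _ & Hr); exists v; rewrite Q_B_from_m in * by exact Hji;
    pose proof (shaped_target HDQ _ _ _ Hv) as Hvn;
    rewrite reach_Q_B_nonroot in * by exact Hvn;
    repeat split; auto; apply Eset_nonroot; tauto.
Qed.

Lemma Q_B_words s u :
  stutter_free s -> reach W' Q' 0 s u -> u <> -1 ->
  (s = [] /\ u = 0) \/ (s = [i] /\ u = m) \/
  exists j t, s = i :: j :: t /\ stutter_free (j :: t) /\ reach (Eset D) Q 0 (j :: t) u.
Proof.
  intros Hs Hr Hu; destruct s as [|j s].
  { left; split; [reflexivity | now apply reach_nil_iff in Hr]. }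
  destruct (Nat.eq_dec j i) as [->|Hji];
    [|exfalso; exact (Hu (reach_Q_B_root_other _ _ _ Hji Hr))].
  apply reach_Q_B_root_i in Hr.
  destruct s as [|k t].
  { right; left; split; [reflexivity | now apply reach_nil_iff in Hr]. }
  right; right; exists k, t; destruct Hs as [Hik Hs].
  rewrite reach_Q_B_from_m in Hr by congruence; auto.
Qed.

Lemma Q_B_unique_words : unique_words (Eset D) Q -> unique_words W' Q'.
Proof.
  intros Huw s s' u Hs Hs' Hr Hr' Hu.
  assert (Hm_unreached : forall j t, ~ reach (Eset D) Q 0 (j :: t) m).
  { intros j t H; destruct (reach_cons_nonroot _ _ HDQ _ _ _ _ _ H); [lia|contradiction]. }
  assert (H0_unreached : forall j t, ~ reach (Eset D) Q 0 (j :: t) 0).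
  { intros j t H; discriminate (reach_root_nil _ _ HDQ _ _ _ H). }
  destruct (Q_B_words _ _ Hs Hr Hu) as [[-> ->]|[[-> ->]|(j & t & -> & Ht & Hrt)]];
    destruct (Q_B_words _ _ Hs' Hr' Hu) as [[-> ?]|[[-> ?]|(j' & t' & -> & Ht' & Hrt')]];
    subst; try reflexivity; try lia;
    try (exfalso; first [eapply H0_unreached; eassumption | eapply Hm_unreached; eassumption]).
  f_equal; eapply Huw; eassumption.
Qed.

Lemma Q_B_live t :
  (forall k j t', nth_error (children t) k = Some (j, t') -> j <> i) ->
  paths_live t (Eset D) Q -> paths_live (Node [(i, t)]) W' Q'.
Proof.
  intros Hlab Ht sigma Hsig.
  destruct (RootP_single _ _ _ Hsig) as [->|(p & Hp & ->)]; [apply live_nil|].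
  destruct p as [|k p].
  - split.
    + exists m; rewrite reach_Q_B_root_i, reach_nil_iff; split; [right; right; right|]; auto.
    + intros u; rewrite reach_Q_B_root_i, reach_nil_iff; lia.
  - specialize (Ht _ Hp).
    destruct (RootP_cons_inv _ _ _ Hp) as (j & t' & Hk & _ & Hag).
    rewrite Hag in *; apply Hlab in Hk.
    destruct Ht as [(u & Hu & Hr) Havoid]; split.
    + exists u; rewrite reach_Q_B_root_i, reach_Q_B_from_m by exact Hk.
      split; [unfold Eset in *; tauto | exact Hr].
    + intros u'; rewrite reach_Q_B_root_i, reach_Q_B_from_m by exact Hk; apply Havoid.
Qed.

End Box.

Definition Q_and (D1 : Z -> Prop) (Q1 : nat -> Z -> Z -> Prop)
  (D2 : Z -> Prop) (Q2 : nat -> Z -> Z -> Prop) : nat -> Z -> Z -> Prop := fun j a b =>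
  Qunder D1 Q1 j a b \/ Qunder D2 Q2 j a b
  \/ (a = 0 /\ (Q1 j 0 b \/ Q2 j 0 b) /\ (D1 b \/ D2 b))
  \/ (a = 0 /\ b = -1 /\ ~ (exists k, (Q1 j 0 k \/ Q2 j 0 k) /\ (D1 k \/ D2 k))).

Lemma Q_and_comm D1 Q1 D2 Q2 j a b : Q_and D1 Q1 D2 Q2 j a b -> Q_and D2 Q2 D1 Q1 j a b.
Proof. unfold Q_and; firstorder. Qed.

Lemma reach_Q_and_comm D1 Q1 D2 Q2 s v u :
  reach (Eset (fun e => D2 e \/ D1 e)) (Q_and D2 Q2 D1 Q1) v s u <->
  reach (Eset (fun e => D1 e \/ D2 e)) (Q_and D1 Q1 D2 Q2) v s u.
Proof.
  apply (reach_agree _ _ _ _ (fun _ => True)); auto.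
  intros j a b _; unfold Eset; split; intros [H Hb]; split; auto using Q_and_comm; tauto.
Qed.

Lemma live_Q_and_comm D1 Q1 D2 Q2 a :
  live (Eset (fun e => D2 e \/ D1 e)) (Q_and D2 Q2 D1 Q1) a ->
  live (Eset (fun e => D1 e \/ D2 e)) (Q_and D1 Q1 D2 Q2) a.
Proof.
  intros [(u & Hu & Hr) Havoid]; split.
  - exists u; rewrite <- reach_Q_and_comm; unfold Eset in *; tauto.
  - intros u'; rewrite <- reach_Q_and_comm; apply Havoid.
Qed.

Section Conj.
Variables (D1 : Z -> Prop) (Q1 : nat -> Z -> Z -> Prop).
Variables (D2 : Z -> Prop) (Q2 : nat -> Z -> Z -> Prop).
Hypotheses (H1 : shaped D1 Q1) (H2 : shaped D2 Q2) (Hdisj : forall e, D1 e -> D2 e -> False).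

Local Notation W := (Eset (fun e => D1 e \/ D2 e)).
Local Notation QA := (Q_and D1 Q1 D2 Q2).

Lemma Q_and_shaped : shaped (fun e => D1 e \/ D2 e) QA.
Proof.
  split.
  - intros e [He|He]; [exact (shaped_pos H1 e He) | exact (shaped_pos H2 e He)].
  - intros j a b [H|[H|[(_ & _ & Hb)|(_ & -> & _)]]]; auto;
      apply Qunder_target in H; tauto.
  - intros j b [H|[H|[(? & _)|(? & _)]]]; try lia;
      apply Qunder_iff in H; auto; [apply (shaped_sink H1) in H | apply (shaped_sink H2) in H];
      exact H.
  - intros j; left; apply Qunder_iff; auto; apply (shaped_sink_loop H1).
Qed.

Lemma Q_and_nonroot1 j a b : a = -1 \/ D1 a -> (QA j a b <-> Q1 j a b).
Proof.
  intros Ha; rewrite <- (Qunder_iff _ _ H1 j a b Ha).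
  assert (Ha0 := nonroot_neq0 _ _ H1 a Ha).
  split; [|left; exact H].
  intros [H|[H|[(? & _)|(? & _)]]]; [exact H| |contradiction|contradiction].
  assert (a = -1) as ->.
  { destruct (Qunder_source _ _ _ _ _ H), Ha; auto; exfalso; eauto. }
  destruct H as [H _]; apply (shaped_sink H2) in H as ->.
  apply Qunder_iff; auto; apply (shaped_sink_loop H1).
Qed.

Lemma reach_Q_and_nonroot1 s v u :
  v = -1 \/ D1 v -> (reach W QA v s u <-> reach (Eset D1) Q1 v s u).
Proof.
  apply (reach_agree _ _ _ _ (fun x => x = -1 \/ D1 x)).
  - intros j a b Ha; rewrite Q_and_nonroot1 by exact Ha.
    split; intros [H _]; pose proof (shaped_target H1 _ _ _ H) as Hb;
      split; auto; apply Eset_nonroot; tauto.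
  - intros j a b _; apply (shaped_target H1).
Qed.

Lemma reach_Q_and_nonroot2_closed s v u :
  v = -1 \/ D2 v -> reach W QA v s u -> u = -1 \/ D2 u.
Proof.
  apply (reach_closed _ _ (fun x => x = -1 \/ D2 x)).
  intros j a b Ha [H|[H|[(Ha0 & _)|(Ha0 & _)]]].
  - assert (a = -1) as ->.
    { destruct (Qunder_source _ _ _ _ _ H), Ha; auto; exfalso; eauto. }
    destruct H as [H _]; left; exact (shaped_sink H1 _ _ H).
  - exact (Qunder_target _ _ _ _ _ H).
  - destruct (nonroot_neq0 _ _ H2 a Ha Ha0).
  - destruct (nonroot_neq0 _ _ H2 a Ha Ha0).
Qed.

Lemma Q_and_root j v :
  QA j 0 v ->
  (D1 v /\ Q1 j 0 v) \/ (D2 v /\ Q2 j 0 v) \/ (v = -1 /\ forall k, D1 k -> ~ Q1 j 0 k).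
Proof.
  intros [(_ & _ & ? & _)|[(_ & _ & ? & _)|[(_ & [Hq|Hq] & Hv)|(_ & -> & Hnone)]]];
    try contradiction.
  - left; split; auto.
    destruct (shaped_target H1 _ _ _ Hq) as [->|]; auto.
    destruct Hv as [Hv|Hv]; [apply (shaped_pos H1) in Hv | apply (shaped_pos H2) in Hv]; lia.
  - right; left; split; auto.
    destruct (shaped_target H2 _ _ _ Hq) as [->|]; auto.
    destruct Hv as [Hv|Hv]; [apply (shaped_pos H1) in Hv | apply (shaped_pos H2) in Hv]; lia.
  - right; right; split; auto.
    intros k Hk Hq; apply Hnone; exists k; auto.
Qed.

Lemma reach_Q_and_root1 j t u :
  D1 u -> (reach W QA 0 (j :: t) u <-> reach (Eset D1) Q1 0 (j :: t) u).
Proof.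
  intros Hu; assert (Hu1 : u <> -1) by (apply (shaped_pos H1) in Hu; lia).
  rewrite !reach_cons_iff; split; intros (v & Hv & _ & Hr).
  - destruct (Q_and_root _ _ Hv) as [(Hv1 & Hq)|[(Hv2 & _)|(-> & _)]].
    + exists v; rewrite reach_Q_and_nonroot1 in Hr by auto.
      repeat split; auto using Eset_nonroot.
    + exfalso; destruct (reach_Q_and_nonroot2_closed _ _ _ (or_intror Hv2) Hr); eauto.
    + destruct (Hu1 (reach_sink _ _ Q_and_shaped _ _ _ Hr)).
  - destruct (shaped_target H1 _ _ _ Hv) as [->|Hv1].
    { destruct (Hu1 (reach_sink _ _ H1 _ _ _ Hr)). }
    exists v; rewrite reach_Q_and_nonroot1 by auto.
    repeat split; [right; right; left|right; right; left|]; auto.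
Qed.

Lemma Q_and_paths_live1 t :
  (forall k j t' v, nth_error (children t) k = Some (j, t') -> D2 v -> ~ Q2 j 0 v) ->
  paths_live t (Eset D1) Q1 -> paths_live t W QA.
Proof.
  intros Hlab Ht sigma Hsig; specialize (Ht _ Hsig).
  destruct sigma as [|k p]; [apply live_nil|].
  destruct (RootP_cons_inv _ _ _ Hsig) as (j & t' & Hk & _ & Hag).
  rewrite Hag in *; destruct Ht as [(u & Hu & Hr) Havoid].
  assert (Hu1 : D1 u).
  { destruct (reach_cons_nonroot _ _ H1 _ _ _ _ _ Hr); [|auto]. destruct (Havoid u); auto. }
  split.
  - exists u; rewrite reach_Q_and_root1 by exact Hu1; split; [right; right; left|]; auto.
  - intros u' Hr' ->; apply reach_cons_iff in Hr' as (v & Hv & _ & Hr').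
    destruct (Q_and_root _ _ Hv) as [(Hv1 & Hq)|[(Hv2 & Hq)|(-> & Hnone)]].
    + apply (Havoid (-1)); [|reflexivity].
      apply reach_cons_iff; exists v; rewrite <- reach_Q_and_nonroot1 by auto.
      repeat split; auto using Eset_nonroot.
    + exact (Hlab _ _ _ _ Hk Hv2 Hq).
    + apply reach_cons_iff in Hr as (w & Hw & _ & Hr).
      destruct (shaped_target H1 _ _ _ Hw) as [->|Hw1]; [|exact (Hnone w Hw1 Hw)].
      apply (reach_sink _ _ H1) in Hr as ->; apply (shaped_pos H1) in Hu1; lia.
Qed.

End Conj.

Lemma Q_and_unique_words D1 Q1 D2 Q2 :
  shaped D1 Q1 -> shaped D2 Q2 -> (forall e, D1 e -> D2 e -> False) ->
  unique_words (Eset D1) Q1 -> unique_words (Eset D2) Q2 ->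
  unique_words (Eset (fun e => D1 e \/ D2 e)) (Q_and D1 Q1 D2 Q2).
Proof.
  intros H1 H2 Hdisj U1 U2 s s' u Hs Hs' Hr Hr' Hu.
  pose proof (Q_and_shaped _ _ _ _ H1 H2) as HA.
  destruct (Z.eq_dec u 0) as [->|Hu0].
  { now rewrite (reach_root_nil _ _ HA _ _ _ Hr), (reach_root_nil _ _ HA _ _ _ Hr'). }
  destruct s as [|j t]; [apply reach_nil_iff in Hr; contradiction|].
  destruct s' as [|j' t']; [apply reach_nil_iff in Hr'; contradiction|].
  destruct (reach_cons_nonroot _ _ HA _ _ _ _ _ Hr) as [?|[Hu1|Hu2]]; [contradiction| |].
  - rewrite reach_Q_and_root1 in Hr, Hr' by auto; eauto.
  - rewrite <- reach_Q_and_comm, reach_Q_and_root1 in Hr, Hr' by eauto; eauto.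
Qed.

Lemma Q_and_paths_live D1 Q1 D2 Q2 t1 t2 :
  shaped D1 Q1 -> shaped D2 Q2 -> (forall e, D1 e -> D2 e -> False) ->
  (forall k j t v, nth_error (children t1) k = Some (j, t) -> D2 v -> ~ Q2 j 0 v) ->
  (forall k j t v, nth_error (children t2) k = Some (j, t) -> D1 v -> ~ Q1 j 0 v) ->
  paths_live t1 (Eset D1) Q1 -> paths_live t2 (Eset D2) Q2 ->
  paths_live (Node (children t1 ++ children t2))
    (Eset (fun e => D1 e \/ D2 e)) (Q_and D1 Q1 D2 Q2).
Proof.
  intros H1 H2 Hdisj N1 N2 L1 L2 sigma Hsig.
  destruct (RootP_app _ _ _ Hsig) as [(s & Hs & ->)|(s & Hs & ->)].
  - exact (Q_and_paths_live1 _ _ _ _ H1 H2 Hdisj _ N1 L1 _ Hs).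
  - apply live_Q_and_comm; eapply Q_and_paths_live1; eauto.
Qed.

Lemma UM_not_prop f D Q pre : UM f D Q pre -> isprop f = false.
Proof. intros H; induction H; simpl; auto; now rewrite IHUM1. Qed.

Lemma UM_plain_body f D Q pre : UM f D Q pre -> plain_body f.
Proof.
  intros H; split; [exact (UM_not_prop _ _ _ _ H)|].
  intros a b ->; inversion H; eapply UM_not_prop; eauto.
Qed.

Lemma UM_shaped f D Q pre : UM f D Q pre -> shaped D Q.
Proof.
  intros H; induction H as [i xi m _ Hm
    | i psi D Q pre m _ IH _ Hm HmD
    | i xi psi D Q pre m _ _ IH _ Hm HmD
    | psi theta D1 Q1 pre1 D2 Q2 pre2 pre _ IH1 _ IH2 _ _ _ _ _].
  - exact (Q_Bxi_shaped i m Hm).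
  - exact (Q_B_shaped i D Q m IH Hm HmD).
  - exact (Q_B_shaped i D Q m IH Hm HmD).
  - exact (Q_and_shaped _ _ _ _ IH1 IH2).
Qed.

Lemma UM_root_arc_ta f D Q pre j v : UM f D Q pre -> Q j 0 v -> D v -> ta f j.
Proof.
  intros H; revert j v; induction H as [i xi m _ Hm
    | i psi D Q pre m Hpsi _ _ Hm _
    | i xi psi D Q pre m _ Hpsi _ _ Hm _
    | psi theta D1 Q1 pre1 D2 Q2 pre2 pre Hpsi IH1 Htheta IH2 _ _ _ _ _];
    intros j v Hq Hv; simpl.
  - destruct (Q_Bxi_root i m Hm j v Hq) as [[-> _]|[_ ->]]; [reflexivity | lia].
  - apply (Q_B_root _ _ _ _ Hm) in Hq as [[-> _]|[_ ->]]; [reflexivity|].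
    destruct Hv as [Hv| ?]; [apply (shaped_pos (UM_shaped _ _ _ _ Hpsi)) in Hv|]; lia.
  - apply (Q_B_root _ _ _ _ Hm) in Hq as [[-> _]|[_ ->]]; [reflexivity|].
    destruct Hv as [Hv| ?]; [apply (shaped_pos (UM_shaped _ _ _ _ Hpsi)) in Hv|]; lia.
  - pose proof (UM_shaped _ _ _ _ Hpsi) as H1; pose proof (UM_shaped _ _ _ _ Htheta) as H2.
    destruct (Q_and_root _ _ _ _ H1 H2 _ _ Hq) as [(? & ?)|[(? & ?)|(-> & _)]]; eauto.
    destruct Hv as [Hv|Hv]; [apply (shaped_pos H1) in Hv | apply (shaped_pos H2) in Hv]; lia.
Qed.

Lemma UM_unique_words f D Q pre : UM f D Q pre -> unique_words (Eset D) Q.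
Proof.
  intros H; induction H as [i xi m _ Hm
    | i psi D Q pre m Hpsi IH _ Hm HmD
    | i xi psi D Q pre m _ Hpsi IH _ Hm HmD
    | psi theta D1 Q1 pre1 D2 Q2 pre2 pre Hpsi IH1 Htheta IH2 Hdisj _ _ _ _].
  - exact (Q_Bxi_unique_words i m Hm).
  - exact (Q_B_unique_words i D Q m (UM_shaped _ _ _ _ Hpsi) Hm HmD IH).
  - exact (Q_B_unique_words i D Q m (UM_shaped _ _ _ _ Hpsi) Hm HmD IH).
  - exact (Q_and_unique_words _ _ _ _ (UM_shaped _ _ _ _ Hpsi) (UM_shaped _ _ _ _ Htheta)
             Hdisj IH1 IH2).
Qed.

Lemma UM_paths_live f D Q pre :
  UM f D Q pre -> DBInormal f -> paths_live (mtree f) (Eset D) Q.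
Proof.
  intros H; induction H as [i xi m Hxi Hm
    | i psi D Q pre m Hpsi IH _ Hm HmD
    | i xi psi D Q pre m Hxi Hpsi IH Hnp Hm HmD
    | psi theta D1 Q1 pre1 D2 Q2 pre2 pre Hpsi IH1 Htheta IH2 Hdisj _ _ _ _];
    intros Hn.
  - simpl; rewrite Hxi; exact (Q_Bxi_live i m Hm).
  - destruct (DBInormal_B_inv i psi (UM_plain_body _ _ _ _ Hpsi) Hn) as [Hn' Hi].
    rewrite mtree_B_plain by exact (UM_plain_body _ _ _ _ Hpsi).
    apply (Q_B_live i D Q m (UM_shaped _ _ _ _ Hpsi) Hm HmD); auto.
    intros k j t Hk ->; exact (Hi (mtree_children_ta _ _ _ _ Hk)).
  - destruct (DBInormal_B_and_inv i xi psi Hxi Hnp Hn) as [Hn' Hi].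
    rewrite mtree_B_and_prop by assumption.
    apply (Q_B_live i D Q m (UM_shaped _ _ _ _ Hpsi) Hm HmD); auto.
    intros k j t Hk ->; exact (Hi (mtree_children_ta _ _ _ _ Hk)).
  - destruct (DBInormal_and_inv _ _ Hn) as (Hn1 & Hn2 & Hta).
    change (mtree (And psi theta))
      with (Node (children (mtree psi) ++ children (mtree theta))).
    apply Q_and_paths_live; eauto using UM_shaped.
    + intros k j t v Hk Hv Hq.
      exact (Hta j (mtree_children_ta _ _ _ _ Hk) (UM_root_arc_ta _ _ _ _ _ _ Htheta Hq Hv)).
    + intros k j t v Hk Hv Hq.
      exact (Hta j (UM_root_arc_ta _ _ _ _ _ _ Hpsi Hq Hv) (mtree_children_ta _ _ _ _ Hk)).
Qed.

Theorem theorem8 :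
  forall (n : nat), (1 < n)%nat ->
  forall (phi : form), DBI phi -> DBInormal phi -> agents_in n phi ->
  forall (D : Z -> Prop) (Q : nat -> Z -> Z -> Prop) (pre : Z -> form),
    UM phi D Q pre ->
    privatized n (Eset D) Q 0%Z phi.
Proof.
  intros n _ phi _ Hn _ D Q pre HU sigma Hsig.
  destruct (UM_paths_live _ _ _ _ HU Hn _ Hsig) as [(u & Hu & Hr) Havoid].
  split; [exists u; split; assumption|].
  intros s Hs Hne u' [_ Hr1] [_ Hr2]; apply Hne.
  exact (UM_unique_words _ _ _ _ HU _ _ u' (nsr_stutter_free n s Hs)
           (DBInormal_paths_stutter_free _ Hn _ Hsig) Hr2 Hr1 (Havoid u' Hr1)).
Qed.
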